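(* For any admissible pair $(r,a)$ and every $i=0,\dots,r-1$, the divisor $X_i-E_1$ on the Danilov resolution of $\frac1r(1,a,r-a)$ is effective.
   Context: Notation: for integers $s$ and $t>0$, $\langle s\rangle_t$ is the least non-negative integer congruent to $s$ modulo $t$. A pair of integers $(r,a)$ is admissible if $r\ge1$, $0\le a<r$, $\gcd(r,a)=1$ (so $a=0$ only for $r=1$). For admissible $(r,a)$ put $N(r,a)=\mathbb Z^3+\mathbb Z\cdot\frac1r(1,a,r-a)\subset\mathbb Q^3$; $e_1,e_2,e_3$ is the standard basis and $\Delta(r,a)$ the cone spanned by $e_1,e_2,e_3$. Let $b$ be an inverse of $a$ modulo $r$ and $p_i=\frac1r(\langle -ib\rangle_r,r-i,i)$, $i=0,\dots,r$ (so $p_0=e_2$, $p_r=e_3$, $p_{r-a}=\frac1r(1,a,r-a)$). For $r>1$ let $(r_L,a_L)=(r-a,\langle r\rangle_{r-a})$, $(r_R,a_R)=(a,\langle -r\rangle_a)$; there are lattice isomorphisms $L:N(r_L,a_L)\to N(r,a)$, $R:N(r_R,a_R)\to N(r,a)$ with $L(e_1)=e_1$, $L(e_2)=e_2$, $L(e_3)=p_{r-a}$, $R(e_1)=e_1$, $R(e_2)=p_{r-a}$, $R(e_3)=e_3$. The Danilov fan $\Sigma(r,a)$ is defined recursively: $\Sigma(1,0)$ is $\Delta(1,0)$ with its faces; for $r>1$, $\Sigma(r,a)$ consists of the cone spanned by $e_2,e_3,p_{r-a}$ with its faces, together with $L(\Sigma(r_L,a_L))$ and $R(\Sigma(r_R,a_R))$.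 The Danilov resolution $Y$ of $\frac1r(1,a,r-a)$ is the smooth toric variety of $\Sigma(r,a)$, with torus $T$; its rays are spanned by $e_1,p_0,\dots,p_r$; $D_i$ is the $T$-invariant prime divisor of the ray through $p_i$ and $E_j$ that of $e_j$. The permutation $\tau(r,a,\cdot)$ of $\{0,\dots,r-1\}$: if $a\in\{1,r-1\}$, $\tau(r,a,i)=\langle ai-1\rangle_r$; otherwise $\tau(r,a,i)=\tau(r-a,\langle r\rangle_{r-a},\langle i\rangle_{r-a})$ for $i\ge a$ and $\tau(r,a,i)=(r-a)+\tau(a,\langle -r\rangle_a,i)$ for $i<a$. With indices mod $r$, on $Y$ define $Y_{i-a}=\sum_{k=0}^{\tau(r,a,i)}D_k$, $Z_i=\sum_{k=\tau(r,a,i)+1}^{r}D_k$ ($i=0,\dots,r-1$), and $X_0,\dots,X_{r-1}$ the unique divisors with $X_0=E_1$ and $X_i+Z_{i+1}=Z_i+X_{i-a}$ for all $i$. *)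

From HB Require Import structures.
From mathcomp Require Import all_boot all_order all_algebra.
Set Implicit Arguments. Unset Strict Implicit. Unset Printing Implicit Defensive.
Import Order.TTheory GRing.Theory Num.Theory.

Definition admissible (r a : nat) : Prop := 0 < r /\ a < r /\ coprime r a.

(* tau(r,a,i), computed by recursion with fuel (fuel r is enough since r
   strictly decreases along the recursion).  <s>_t for s = a*i-1, -r is
   encoded with naturals: <a i - 1>_r = (a i + r - 1) %% r,
   <r>_{r-a} = r %% (r-a), <-r>_a = (a - r %% a) %% a. *)
Fixpoint tau_aux (n r a i : nat) : nat :=
  match n with
  | 0 => 0
  | n'.+1 =>
      if (a == 1) || (a == r - 1) then (a * i + r - 1) %% r
      else if a <= i then tau_aux n' (r - a) (r %% (r - a)) (i %% (r - a))
      else (r - a) + tau_aux n' a ((a - r %% a) %% a) i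
  end.

Definition tau (r a i : nat) : nat := tau_aux r r a i.

(* T-invariant Weil divisors on the Danilov resolution Y of 1/r(1,a,r-a):
   integer combinations of the prime divisors attached to the rays
   e_1 (index None) and p_0, ..., p_r (index Some k). *)
Definition ray (r : nat) := option 'I_r.+1.
Definition tdiv (r : nat) := {ffun ray r -> int}.

Definition E1 (r : nat) : tdiv r := [ffun x : ray r => Posz (x == None : nat)].
Definition Ddiv (r k : nat) : tdiv r :=
  [ffun x : ray r => Posz (x == Some (inord k) : nat)].

Definition Zdiv (r a i : nat) : tdiv r :=
  (\sum_((tau r a (i %% r)).+1 <= k < r.+1) Ddiv r k)%R.

Definition effective (r : nat) (d : tdiv r) : Prop := forall x, (0 <= d x)%R.

Definition Xrec (r a : nat) (X : nat -> tdiv r) : Prop :=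
  X 0 = E1 r /\
  forall i, i < r -> (X i + Zdiv r a i.+1)%R = (Zdiv r a i + X ((i + r - a) %% r)%N)%R.

(** For a fixed [k], write [c i] for the [D_k]-coefficient of [X_i - E_1] and
    [f y = [tau(r,a,y) < k]] for that of [Z_y]; the defining relation reads
    [c (i + a) + f (i + a + 1) = c i + f (i + a)] (indices mod [r]) with [c 0 = 0].
    Since [gcd(r,a) = 1], the orbit of [0] under [i |-> i + a] is all of [Z/r], so a
    solution is unique and it suffices to construct one with values in [nat].
    This follows the recursion defining [tau]: the orbit of [i |-> i + a] on [[a, r)]
    (resp. [[0, a)]) is the orbit of the left child [(r - a, r mod (r - a))] (resp.
    the right child [(a, -r mod a)]), and [tau] on [[a, r)] (resp. [[0, a)]) is the
    child's [tau] (resp. shifted by [r - a]).  So for [k <= r - a] only the left child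
    matters and for [k > r - a] only the right one, and a natural solution for the
    child lifts to one for [(r, a)], corrected at [i = r - 1] where the orbit wraps
    around.  The base cases [a = 1] and [a = r - 1] are explicit. *)

From mathcomp Require Import all_boot all_order all_algebra zify.

Set Implicit Arguments.
Unset Strict Implicit.
Unset Printing Implicit Defensive.

Import GRing.Theory.

Lemma coprime_subr m n : n <= m -> coprime m (m - n) = coprime m n.
Proof.
move=> le_nm; rewrite /coprime; congr (_ == 1).
rewrite gcdnC -{2}(subnK le_nm) gcdnDl gcdnC.
by rewrite -gcdnDr subnK // gcdnC.
Qed.

Lemma coprime_left_child r a : a <= r -> coprime r a -> coprime (r - a) (r %% (r - a)).
Proof. by move=> le_ar co_ra; rewrite coprime_modr coprime_sym coprime_subr. Qed.

Lemma coprime_right_child r a : 0 < a -> coprime r a -> coprime a ((a - r %% a) %% a).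
Proof.
move=> a_gt0 co_ra; rewrite coprime_modr coprime_subr ?coprime_modr 1?coprime_sym //.
exact/ltnW/ltn_pmod.
Qed.

Lemma nonbase_bounds r a : a < r -> coprime r a -> ((a == 1) || (a == r - 1)) = false ->
  0 < a /\ 0 < r - a.
Proof.
case: a => [|a] lt_ar; last by move=> _ /norP[/eqP ? /eqP ?]; lia.
by rewrite /coprime gcdn0 => /eqP ->.
Qed.

Lemma tau_aux_split n r a y : ((a == 1) || (a == r - 1)) = false ->
  tau_aux n.+1 r a y =
  if a <= y then tau_aux n (r - a) (r %% (r - a)) (y %% (r - a))
  else (r - a) + tau_aux n a ((a - r %% a) %% a) y.
Proof. by move=> /= ->. Qed.

Lemma tau_aux_lt n r a y : 0 < r -> r <= n -> a < r -> coprime r a -> tau_aux n r a y < r.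
Proof.
elim: n r a y => [|n IHn] r a y r_gt0 le_rn lt_ar co_ra; first lia.
case base: ((a == 1) || (a == r - 1)); first by rewrite /= base ltn_mod.
have [a_gt0 s_gt0] := nonbase_bounds lt_ar co_ra base.
rewrite tau_aux_split //; case: ifP => _.
  suff : tau_aux n (r - a) (r %% (r - a)) (y %% (r - a)) < r - a by lia.
  apply: IHn; rewrite ?ltn_pmod ?coprime_left_child ?(ltnW lt_ar) //; lia.
suff : tau_aux n a ((a - r %% a) %% a) y < a by lia.
apply: IHn; rewrite ?ltn_pmod ?coprime_right_child //; lia.
Qed.

Definition potential (r a : nat) (f : nat -> bool) (c : nat -> nat) : Prop :=
  c 0 = 0 /\
  forall x, x < r -> c ((x + a) %% r) + f ((x + a).+1 %% r) = c x + f ((x + a) %% r).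

Section PotentialLift.

Variables r a s : nat.
Hypotheses (a_gt0 : 0 < a) (s_gt0 : 0 < s) (r_eq : r = a + s).

Lemma addn_mod_small x : x < s -> (x + a) %% r = x + a.
Proof. by move=> lt_xs; rewrite modn_small //; lia. Qed.

Lemma addn_mod_wrap x : s <= x <= r -> (x + a) %% r = x - s.
Proof.
by move=> le_sxr; rewrite (_ : x + a = x - s + r) ?modnDr ?modn_small; lia.
Qed.

Lemma modnD_rmod y : (y + r %% s) %% s = (y + a) %% s.
Proof. by rewrite modnDmr r_eq addnA modnDr. Qed.

Lemma potential_lift_left (fL F : nat -> bool) (cL : nat -> nat) :
  (forall y, y < a -> F y = false) ->
  (forall y, a <= y < r -> F y = fL (y %% s)) ->
  potential s (r %% s) fL cL ->
  potential r a F (fun x => cL (x %% s) + (fL (r %% s) && (x == r.-1))).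
Proof.
move=> F_small F_large [cL0 stepL]; split.
  by rewrite mod0n cL0 (_ : (0 == r.-1) = false) ?andbF //; apply/eqP; lia.
move=> x lt_xr; rewrite -addSn.
have [lt_xs | le_sx] := ltnP x s.
  have := stepL x lt_xs.
  rewrite -addSn !modnD_rmod (modn_small lt_xs) addn_mod_small //.
  rewrite (F_large (x + a)); last by lia.
  have -> : (x == r.-1) = false by apply/eqP; lia.
  have [lt_x1s | eq_x1s] : x.+1 < s \/ x.+1 = s by lia.
    rewrite addn_mod_small // F_large; last by lia.
    have -> : (x + a == r.-1) = false by apply/eqP; lia.
    by rewrite !andbF !addn0.
  have e : x.+1 + a = r by lia.
  rewrite e modnn F_small //.
  have -> : (x + a == r.-1) = true by apply/eqP; lia.
  by rewrite andbT andbF !addn0.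
rewrite !addn_mod_wrap; try lia.
rewrite (F_small (x - s)); last by lia.
have -> : (x - s == r.-1) = false by apply/eqP; lia.
have -> : x %% s = (x - s) %% s by rewrite -{1}(subnK le_sx) modnDr.
have [eq_xr | lt_x1r] : x = r.-1 \/ x < r.-1 by lia.
  rewrite (_ : (x.+1 - s) = a); last by lia.
  rewrite F_large; last by lia.
  by rewrite eq_xr eqxx andbT andbF r_eq modnDr; lia.
rewrite F_small; last by lia.
by rewrite (_ : (x == r.-1) = false) ?andbF //; apply/eqP; lia.
Qed.

Lemma modn_shift_right x : s <= x < r -> (x %% a + (a - r %% a) %% a) %% a = x - s.
Proof.
move=> le_sxr; rewrite modnDm r_eq modnDl.
have -> : x + (a - s %% a) = (s %/ a).+1 * a + (x - s).
  rewrite mulSn; have := divn_eq s a; have := ltn_pmod s a_gt0.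
  by move: (s %/ a * a) (s %% a) => q m; lia.
by rewrite modnMDl modn_small //; lia.
Qed.

Lemma potential_lift_right (fR F : nat -> bool) (cR : nat -> nat) :
  (forall y, y < a -> F y = fR y) ->
  (forall y, a <= y < r -> F y) ->
  potential a ((a - r %% a) %% a) fR cR ->
  potential r a F (fun x => cR (x %% a) + (~~ fR 0 && (x == r.-1))).
Proof.
move=> F_small F_large [cR0 stepR]; split.
  by rewrite mod0n cR0 (_ : (0 == r.-1) = false) ?andbF //; apply/eqP; lia.
move=> x lt_xr; rewrite -addSn.
have [lt_xs | le_sx] := ltnP x s.
  rewrite addn_mod_small // modnDr (F_large (x + a)); last by lia.
  have -> : (x == r.-1) = false by apply/eqP; lia.
  have [lt_x1s | eq_x1s] : x.+1 < s \/ x.+1 = s by lia.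
    rewrite addn_mod_small // F_large; last by lia.
    by rewrite (_ : (x + a == r.-1) = false) ?andbF //; apply/eqP; lia.
  rewrite (_ : x.+1 + a = r) ?modnn ?F_small //; last by lia.
  rewrite (_ : (x + a == r.-1) = true) ?andbT ?andbF; last by apply/eqP; lia.
  by case: (fR 0); lia.
rewrite !addn_mod_wrap; try lia.
rewrite (F_small (x - s)); last by lia.
rewrite (modn_small (_ : x - s < a)); last by lia.
have -> : (x - s == r.-1) = false by apply/eqP; lia.
have := stepR (x %% a) (ltn_pmod x a_gt0).
have : (x %% a + (a - r %% a) %% a) %% a = x - s by apply: modn_shift_right; rewrite le_sx.
move: (x %% a) ((a - r %% a) %% a) => t b shift.
rewrite !shift -addn1 -modnDml shift addn1; clear shift stepR.
have [eq_xr | lt_x1r] : x = r.-1 \/ x < r.-1 by lia.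
  rewrite (_ : (x - s).+1 = a) ?modnn; last by lia.
  by rewrite (_ : x.+1 - s = a) ?F_large ?eq_xr ?eqxx; lia.
rewrite modn_small; last by lia.
by rewrite (_ : x.+1 - s = (x - s).+1) ?F_small; lia.
Qed.

End PotentialLift.

Lemma modn_pred r y : y < r -> (1 * y + r - 1) %% r = if y == 0 then r - 1 else y - 1.
Proof.
case: y => [|y] lt_yr /=; first by rewrite mul1n add0n modn_small; lia.
by rewrite (_ : 1 * y.+1 + r - 1 = y + r) ?modnDr ?modn_small; lia.
Qed.

Lemma modn_opp_pred r y : y < r -> ((r - 1) * y + r - 1) %% r = r - 1 - y.
Proof.
move=> lt_yr; rewrite (_ : (r - 1) * y + r - 1 = y * r + (r - 1 - y)); last by nia.
by rewrite modnMDl modn_small; lia.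
Qed.

Lemma potential_shift_one r k : 1 < r ->
  potential r 1 (fun y => (1 * y + r - 1) %% r < k) (fun x => 0 < k <= x).
Proof.
move=> lt_1r; split=> [|x lt_xr]; first by case: k.
rewrite addn1.
have [eq_x1r | lt_x1r] : x.+1 = r \/ x.+1 < r by lia.
  have -> : x.+1 %% r = 0 by rewrite eq_x1r modnn.
  have -> : x.+2 %% r = 1 by rewrite -eq_x1r -[x.+2]addn1 modnDl modn_small; lia.
  by rewrite !modn_pred //=; lia.
have [eq_x2r | lt_x2r] : x.+2 = r \/ x.+2 < r by lia.
  by rewrite (modn_small lt_x1r) eq_x2r modnn !modn_pred //=; lia.
by rewrite (modn_small lt_x1r) (modn_small lt_x2r) !modn_pred //=; lia.
Qed.

Lemma potential_shift_opp r k : 0 < r ->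
  potential r (r - 1) (fun y => ((r - 1) * y + r - 1) %% r < k)
                      (fun x => (k < r) && (r - k <= x)).
Proof.
move=> r_gt0; split=> [|x lt_xr]; first by lia.
have -> : (x + (r - 1)).+1 %% r = x.
  by rewrite (_ : (x + (r - 1)).+1 = x + r) ?modnDr ?modn_small; lia.
case: x lt_xr => [|x] lt_xr.
  by rewrite add0n (modn_small (_ : r - 1 < r)) ?modn_opp_pred; lia.
rewrite (_ : x.+1 + (r - 1) = x + r) ?modnDr ?(modn_small (_ : x < r)); try lia.
by rewrite !modn_opp_pred; lia.
Qed.

Lemma tau_aux_potential n r a k : 0 < r -> r <= n -> a < r -> coprime r a ->
  {c | potential r a (fun y => tau_aux n r a y < k) c}.
Proof.
elim: n r a k => [|n IHn] r a k r_gt0 le_rn lt_ar co_ra; first by exfalso; lia.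
case base: ((a == 1) || (a == r - 1)).
  rewrite /= base; have [a1 | a_ne1] := eqVneq a 1.
    by rewrite a1 in lt_ar *; eexists; apply: potential_shift_one.
  move: base; rewrite (negbTE a_ne1) => /eqP ->.
  by eexists; apply: potential_shift_opp.
have [a_gt0 s_gt0] := nonbase_bounds lt_ar co_ra base.
set s := r - a; have r_eq : r = a + s by lia.
have [le_ks | lt_sk] := leqP k s.
  have [cL potL] := IHn s (r %% s) k s_gt0 ltac:(lia) (ltn_pmod _ s_gt0)
    (coprime_left_child (ltnW lt_ar) co_ra).
  eexists; apply: (potential_lift_left a_gt0 s_gt0 r_eq _ _ potL) => y bound_y;
    rewrite tau_aux_split // -/s.
    by rewrite (leqNgt a y) bound_y /=; apply/negbTE; rewrite -leqNgt; lia.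
  by case/andP: bound_y => ->.
have [cR potR] := IHn a ((a - r %% a) %% a) (k - s) a_gt0 ltac:(lia) (ltn_pmod _ a_gt0)
  (coprime_right_child a_gt0 co_ra).
eexists; apply: (potential_lift_right a_gt0 s_gt0 r_eq _ _ potR) => y bound_y;
  rewrite tau_aux_split // -/s.
  by rewrite (leqNgt a y) bound_y /=; apply/idP/idP; lia.
case/andP: bound_y => -> _.
have : tau_aux n s (r %% s) (y %% s) < s.
  by apply: tau_aux_lt; rewrite ?ltn_pmod ?coprime_left_child ?(ltnW lt_ar) //; lia.
lia.
Qed.

Lemma mod_sub_addK r a i : a < r -> i < r -> ((i + r - a) %% r + a) %% r = i.
Proof.
move=> lt_ar lt_ir; rewrite modnDml (_ : i + r - a + a = i + r); last by lia.
by rewrite modnDr modn_small.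
Qed.

Lemma mod_add_subK r a x : a < r -> x < r -> ((x + a) %% r + r - a) %% r = x.
Proof.
move=> lt_ar lt_xr; rewrite -addnBA ?(ltnW lt_ar) // modnDml.
by rewrite (_ : x + a + (r - a) = x + r) ?modnDr ?modn_small; lia.
Qed.

Lemma orbit_const (T : Type) r a (d : nat -> T) : 0 < r -> coprime r a ->
  (forall x, x < r -> d ((x + a) %% r) = d x) -> forall i, i < r -> d i = d 0.
Proof.
move=> r_gt0 co_ra d_inv i lt_ir.
have d_mul m : d ((m * a) %% r) = d 0.
  elim: m => [|m IHm]; first by rewrite mul0n mod0n.
  by rewrite mulSn addnC -modnDml d_inv ?ltn_pmod.
have [r1 | lt_1r] : r = 1 \/ 1 < r by lia.
  by rewrite (_ : i = 0) //; lia.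
have a_gt0 : 0 < a.
  by move: co_ra; case: posnP => [-> | //]; rewrite /coprime gcdn0 => /eqP; lia.
case: (egcdnP r a_gt0) => u v bezout _.
rewrite coprime_sym /coprime in co_ra; rewrite (eqP co_ra) in bezout.
by rewrite -(d_mul (i * u)) -mulnA bezout mulnDr muln1 mulnA modnMDl modn_small.
Qed.

Lemma sum_indicator_nat m n k :
  (\sum_(m <= j < n) Posz (k == j))%R = Posz ((m <= k) && (k < n)).
Proof.
elim: n => [|n IHn]; first by rewrite big_geq //; case: (m <= k).
have [le_mn | lt_nm] := leqP m n; last first.
  rewrite big_geq // (_ : (m <= k < n.+1) = false) //.
  by apply/negP => /andP[]; lia.
rewrite big_nat_recr //= IHn -PoszD; congr Posz.
by case: (eqVneq k n) => [->|]; lia.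
Qed.

Lemma Zdiv_Some r a i (k : 'I_r.+1) : Zdiv r a i (Some k) = Posz (tau r a (i %% r) < k).
Proof.
rewrite /Zdiv sum_ffunE (eq_big_nat _ _ (F2 := fun j => Posz (nat_of_ord k == j))).
  by rewrite sum_indicator_nat ltn_ord andbT.
move=> j /andP[_ lt_jr]; rewrite /Ddiv ffunE /=; congr (Posz (nat_of_bool _)).
apply/eqP/eqP => [[->] | <-]; first by rewrite inordK.
by congr Some; apply: val_inj; rewrite /= inordK.
Qed.

Lemma Zdiv_None r a i : Zdiv r a i None = 0%R.
Proof. by rewrite /Zdiv sum_ffunE big1 // => j _; rewrite ffunE. Qed.

(* A [sig] rather than [exists], so that the solutions for all [k] can be
   assembled into a single divisor. *)
Definition tau_potential r a k (adm : admissible r a) :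
    {c | potential r a (fun y => tau r a y < k) c} :=
  tau_aux_potential k (proj1 adm) (leqnn r) (proj1 (proj2 adm)) (proj2 (proj2 adm)).

Definition Xsol r a (adm : admissible r a) (i : nat) : tdiv r :=
  [ffun x : ray r => if x is Some k then Posz (sval (tau_potential k adm) i) else Posz 1].

Lemma Xsol_rec r a (adm : admissible r a) : Xrec a (Xsol adm).
Proof.
have [r_gt0 [lt_ar _]] := adm.
split=> [|i lt_ir].
  apply/ffunP => -[k|]; rewrite !ffunE //=.
  by rewrite (svalP (tau_potential k adm)).1.
apply/ffunP => -[k|]; rewrite !ffunE /= ?Zdiv_None //.
rewrite !Zdiv_Some -!PoszD; congr Posz.
set j := (i + r - a) %% r.
have lt_jr : j < r by exact: ltn_pmod.
have ja : (j + a) %% r = i by exact: mod_sub_addK.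
have ja1 : (j + a).+1 %% r = i.+1 %% r by rewrite -addn1 -modnDml ja addn1.
have := (svalP (tau_potential k adm)).2 j lt_jr.
rewrite ja ja1 (modn_small lt_ir); lia.
Qed.

Lemma Xrec_unique r a (X Y : nat -> tdiv r) : admissible r a -> Xrec a X -> Xrec a Y ->
  forall i, i < r -> X i = Y i.
Proof.
move=> [r_gt0 [lt_ar co_ra]] [X0 X_rec] [Y0 Y_rec] i lt_ir.
apply/eqP; rewrite -subr_eq0; apply/eqP.
rewrite (orbit_const (d := fun i => X i - Y i)%R r_gt0 co_ra) ?X0 ?Y0 ?subrr // => x lt_xr.
have lt_yr : (x + a) %% r < r by exact: ltn_pmod.
have := X_rec _ lt_yr; have := Y_rec _ lt_yr; rewrite mod_add_subK //.
set y := (x + a) %% r => eY eX.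
have -> : X y = (Zdiv r a y + X x - Zdiv r a y.+1)%R by rewrite -eX addrK.
have -> : Y y = (Zdiv r a y + Y x - Zdiv r a y.+1)%R by rewrite -eY addrK.
by rewrite opprB addrA subrK opprD addrACA subrr add0r.
Qed.

Theorem mainTheorem5 (r a : nat) (adm : admissible r a) :
  (exists X : nat -> tdiv r, Xrec a X) /\
  (forall X : nat -> tdiv r, Xrec a X ->
     forall i, i < r -> effective (X i - E1 r)%R).
Proof.
split; first by exists (Xsol adm); exact: Xsol_rec.
move=> X X_rec i lt_ir x.
rewrite (Xrec_unique adm X_rec (Xsol_rec adm) lt_ir) !ffunE.
by case: x => [k|] /=; rewrite ?subr0 ?subrr.
Qed.
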